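(* Let $L=1$ and $\vec m=(a,b)\in\mathcal R^2$ be arbitrary. For every topological space $X$, all $k\in\mathbb N$, $n\ge0$ and every cycle $u\in\mathcal K_n(X)$ (i.e. $\partial_n(u)=0$), the following equalities hold in ${}_{\vec m}\mathcal H_n(X)$: $$[a^k\,\mathcal{SD}_n^{(k)}(u)]=[b^k u],\qquad [b^k\,\mathcal{SD}_n^{(k)}(u)]=[a^k u],$$ where $\mathcal{SD}_n^{(k)}$ denotes the $k$-fold composite of $\mathcal{SD}_n$.
   Context: $\mathcal R$ is a commutative ring with unit. $\mathcal S_n(X)$ = continuous maps $[0,1]^n\to X$ ($[0,1]^0=\{0\}$), $\mathcal K_n(X)$ the free $\mathcal R$-module on $\mathcal S_n(X)$, $\mathcal K_{-1}(X)=0$. Boundary: for $n\ge1$, $\partial_n(T)=\sum_{j=1}^n(-1)^{j+1}(a\langle T\rangle_{n,0,j}+b\langle T\rangle_{n,1,j})$ where $\langle T\rangle_{n,i,j}(x_1,\dots,x_{n-1})=T(x_1,\dots,x_{j-1},i,x_j,\dots,x_{n-1})$ ($\langle T\rangle_{1,i,1}(0)=T(i)$), extended linearly, $\partial_0=0$; ${}_{\vec m}\mathcal H_n(X)=\ker\partial_n/\operatorname{im}\partial_{n+1}$ and $[u]$ is the class of a cycle $u$. Subdivision maps ($\mathcal R$-linear): $\mathcal{SD}_0(T)=-T$ and for $n\ge1$, $\mathcal{SD}_n(T)=\sum_{\vec e\in\{0,2\}^n}\sum_{\vec v\in\mathcal V_{\vec e,n}}(-\prod_iv_i)\,T\circ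 h_{\vec e,\vec v}$, where $\mathcal V_{\vec e,n}$ is the set of $\vec v\in\{-1,1\}^n$ with $v_i=1$ whenever $e_i=0$, and $h_{\vec e,\vec v}(x)_i=\frac13(e_i+v_ix_i)$. *)

From Stdlib Require List.
From HB Require Import structures.
From mathcomp Require Import all_boot all_order all_algebra.
From mathcomp Require Import all_classical all_reals all_analysis.
Set Implicit Arguments. Unset Strict Implicit. Unset Printing Implicit Defensive.
Import Order.TTheory GRing.Theory Num.Theory.
Import numFieldNormedType.Exports.
Local Open Scope classical_set_scope.
Local Open Scope ring_scope.

(* Points of R^n are row vectors 'rV[R]_n ; the unit cube [0,1]^n is Icube n
   (for n = 0, 'rV_0 has a single point, matching [0,1]^0 = {0}).
   A singular n-cube is a map T : 'rV[R]_n -> X continuous on [0,1]^n;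
   two such maps are the same cube iff they agree on [0,1]^n.
   An element of K_n(X) (free Rg-module on the n-cubes) is represented by a
   formal list of (coefficient, cube); the element it denotes is determined
   by its coefficient function [coef]. *)

Section Cubical.
Variables (Rg : comPzRingType) (R : realType) (X : topologicalType).

Definition Icube (n : nat) : set 'rV[R]_n :=
  [set x | forall i : 'I_n, 0 <= x ord0 i <= 1].

Definition chain (n : nat) := seq (Rg * ('rV[R]_n -> X)).

Definition valid (n : nat) (l : chain n) : Prop :=
  forall p, List.In p l -> {within (@Icube n), continuous p.2}.

Definition same_cube (n : nat) (T S : 'rV[R]_n -> X) : Prop :=
  forall x, @Icube n x -> T x = S x.

Definition coef (n : nat) (l : chain n) (S : 'rV[R]_n -> X) : Rg :=
  \sum_(p <- l) (if `[< same_cube p.2 S >] then p.1 else 0).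

(* ins j t x = (x_1,..,x_{j-1}, t, x_j, .., x_{n}) (0-based j) *)
Definition ins (n : nat) (j : 'I_n.+1) (t : R) (x : 'rV[R]_n) : 'rV[R]_n.+1 :=
  \row_k match unlift j k with None => t | Some k' => x ord0 k' end.

(* face <T>_{n+1,i,j+1} *)
Definition face (n : nat) (T : 'rV[R]_n.+1 -> X) (i : R) (j : 'I_n.+1) :
  'rV[R]_n -> X := fun x => T (ins j i x).

Definition bd (a b : Rg) (n : nat) (l : chain n.+1) : chain n :=
  flatten [seq flatten [seq [:: ((-1) ^+ (val j) * a * p.1, face p.2 0 j);
                                ((-1) ^+ (val j) * b * p.1, face p.2 1 j)]
                         | j : 'I_n.+1 <- enum 'I_n.+1] | p <- l].

(* u is a cycle (d_0 = 0) *)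
Definition is_cycle (a b : Rg) (n : nat) : chain n -> Prop :=
  match n as m return chain m -> Prop with
  | 0 => fun _ => True
  | m.+1 => fun u => forall S, coef (bd a b u) S = 0
  end.

Definition homologous (a b : Rg) (n : nat) (x y : chain n) : Prop :=
  exists w : chain n.+1, valid w /\
    forall S, coef (bd a b w) S = coef x S - coef y S.

Definition scale (n : nat) (r : Rg) (l : chain n) : chain n :=
  [seq (r * p.1, p.2) | p <- l].

(* Subdivision. A pair (e_i, v_i) with v_i = 1 whenever e_i = 0 is encoded
   by k : 'I_3 : 0 -> (0,1), 1 -> (2,1), 2 -> (2,-1). *)
Definition e_of (k : 'I_3) : R := if val k == 0%N then 0 else 2.
Definition v_of (k : 'I_3) : R := if val k == 2%N then -1 else 1.
Definition vR_of (k : 'I_3) : Rg := if val k == 2%N then -1 else 1.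

Definition h_map (n : nat) (f : {ffun 'I_n -> 'I_3}) (x : 'rV[R]_n) : 'rV[R]_n :=
  \row_i ((e_of (f i) + v_of (f i) * x ord0 i) / 3).

Definition SD_cube (n : nat) : Rg -> ('rV[R]_n -> X) -> chain n :=
  match n as m return Rg -> ('rV[R]_m -> X) -> chain m with
  | 0 => fun c T => [:: (c * (-1), T)]
  | m.+1 => fun c T =>
      [seq (c * (- \prod_(i < m.+1) vR_of (f i)), fun x => T (h_map f x))
      | f : {ffun 'I_m.+1 -> 'I_3} <- enum {ffun 'I_m.+1 -> 'I_3}]
  end.

Definition SD (n : nat) (l : chain n) : chain n :=
  flatten [seq SD_cube p.1 p.2 | p <- l].

End Cubical.

From Stdlib Require List.
From mathcomp Require Import all_boot all_order all_algebra.
From mathcomp Require Import all_classical all_reals all_analysis.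
From mathcomp Require Import ring lra.
Set Implicit Arguments. Unset Strict Implicit. Unset Printing Implicit Defensive.
Import Order.TTheory GRing.Theory Num.Theory.
Import numFieldNormedType.Exports.
Local Open Scope classical_set_scope.
Local Open Scope ring_scope.

(* Every chain-level operation used here is precomposition with a formal
   combination of maps between standard cubes: the boundary with the faces
   [bdc n], and SD with minus [subdiv n], the n-fold product of the
   one-dimensional subdivision [t/3] + [(2+t)/3] - [(2-t)/3].  Combinations are
   handled through the pairing [evalc c w = \sum_i c_i w(f_i)]; the coefficients
   of a chain are its pairings with indicators of cubes.  Three identities
   between combinations carry the proof: [subdiv] commutes with [bdc], so SD is
   a chain map; the homotopy [subdiv_htpy] satisfies
   [D bdc + bdc D = a (id - subdiv)], so [a SD(u) ~ -a u] for a cycle u; and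
   dropping the first coordinate, [C bdc + bdc C = (a + b) id], so
   [(a + b) u ~ 0] and hence [b^k u ~ (-a)^k u].  Iterating the second gives
   [a^k SD^k(u) ~ (-a)^k u ~ b^k u]; the other equality follows by applying the
   same facts to the cycle SD^k(u) and multiplying by [(-1)^k]. *)

Section Combinations.
Variable Rg : comPzRingType.

Definition evalc {Y : Type} (c : seq (Rg * Y)) (w : Y -> Rg) : Rg :=
  \sum_(p <- c) p.1 * w p.2.

Definition compc {A B C : Type} (c : seq (Rg * (B -> C))) (d : seq (Rg * (A -> B))) :
  seq (Rg * (A -> C)) :=
  flatten [seq [seq (p.1 * q.1, p.2 \o q.2) | q <- d] | p <- c].

Definition scalec {Y : Type} (r : Rg) (c : seq (Rg * Y)) : seq (Rg * Y) :=
  [seq (r * p.1, p.2) | p <- c].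

Variable Y : Type.
Implicit Types (c d : seq (Rg * Y)) (w F G : Y -> Rg).

Lemma evalc_nil w : evalc [::] w = 0.
Proof. by rewrite /evalc big_nil. Qed.

Lemma evalc_cons (p : Rg * Y) c w : evalc (p :: c) w = p.1 * w p.2 + evalc c w.
Proof. by rewrite /evalc big_cons. Qed.

Lemma evalc_cat c d w : evalc (c ++ d) w = evalc c w + evalc d w.
Proof. by rewrite /evalc big_cat. Qed.

Lemma evalc_scalec r c w : evalc (scalec r c) w = r * evalc c w.
Proof. by rewrite /evalc big_map mulr_sumr; apply: eq_bigr => p _; rewrite mulrA. Qed.

Lemma evalc_flatten (I : Type) (s : seq I) (F : I -> seq (Rg * Y)) w :
  evalc (flatten [seq F i | i <- s]) w = \sum_(i <- s) evalc (F i) w.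
Proof.
elim: s => [|i s IH] /=; first by rewrite evalc_nil big_nil.
by rewrite evalc_cat IH big_cons.
Qed.

Lemma evalc_ext c F G : F =1 G -> evalc c F = evalc c G.
Proof. by move=> eFG; apply: eq_bigr => p _; rewrite eFG. Qed.

Lemma evalc_ext_in c F G :
  (forall p, List.In p c -> F p.2 = G p.2) -> evalc c F = evalc c G.
Proof.
elim: c => [|p c IH] eFG; first by rewrite !evalc_nil.
by rewrite !evalc_cons eFG ?IH //; [move=> q cq; apply: eFG; right | left].
Qed.

Lemma evalc0 c : evalc c (fun _ => 0) = 0.
Proof. by rewrite /evalc big1 // => p _; rewrite mulr0. Qed.

Lemma evalcD c F G : evalc c (fun f => F f + G f) = evalc c F + evalc c G.
Proof. by rewrite /evalc -big_split; apply: eq_bigr => p _; rewrite mulrDr. Qed.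

Lemma evalcZ c x F : evalc c (fun f => x * F f) = x * evalc c F.
Proof.
by rewrite /evalc mulr_sumr; apply: eq_bigr => p _; rewrite !mulrA [p.1 * x]mulrC.
Qed.

Lemma evalcN c F : evalc c (fun f => - F f) = - evalc c F.
Proof. by rewrite /evalc -sumrN; apply: eq_bigr => p _; rewrite mulrN. Qed.

Lemma evalcB c F G : evalc c (fun f => F f - G f) = evalc c F - evalc c G.
Proof. by rewrite evalcD evalcN. Qed.

End Combinations.

Lemma evalc_compc (Rg : comPzRingType) (A B C : Type)
    (c : seq (Rg * (B -> C))) (d : seq (Rg * (A -> B))) w :
  evalc (compc c d) w = evalc c (fun f => evalc d (fun g => w (f \o g))).
Proof.
rewrite /compc evalc_flatten /evalc; apply: eq_bigr => p _.
by rewrite big_map mulr_sumr; apply: eq_bigr => q _; rewrite mulrA.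
Qed.

Lemma evalc_compcA (Rg : comPzRingType) (A B C D : Type)
    (c : seq (Rg * (C -> D))) (d : seq (Rg * (B -> C))) (e : seq (Rg * (A -> B))) w :
  evalc (compc (compc c d) e) w = evalc (compc c (compc d e)) w.
Proof.
rewrite evalc_compc [RHS]evalc_compc evalc_compc.
by apply: evalc_ext => f; rewrite evalc_compc.
Qed.

Section CubeCoordinates.
Variable R : realType.

Definition rbehead n (x : 'rV[R]_n.+1) : 'rV[R]_n := \row_i x ord0 (lift ord0 i).

Definition tailmap m n (f : 'rV[R]_m -> 'rV[R]_n) : 'rV[R]_m.+1 -> 'rV[R]_n.+1 :=
  fun x => ins ord0 (x ord0 ord0) (f (rbehead x)).

Definition headmap n (g : R -> R) : 'rV[R]_n.+1 -> 'rV[R]_n.+1 :=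
  fun x => ins ord0 (g (x ord0 ord0)) (rbehead x).

Definition head2map n (g : R -> R -> R) : 'rV[R]_n.+2 -> 'rV[R]_n.+1 :=
  fun x => ins ord0 (g (x ord0 ord0) (rbehead x ord0 ord0)) (rbehead (rbehead x)).

Lemma insE n (j : 'I_n.+1) (t : R) (x : 'rV[R]_n) k :
  ins j t x ord0 k = if unlift j k is Some k' then x ord0 k' else t.
Proof. by rewrite mxE. Qed.

Lemma ins_at n (j : 'I_n.+1) (t : R) (x : 'rV[R]_n) : ins j t x ord0 j = t.
Proof. by rewrite insE unlift_none. Qed.

Lemma ins_lift n (j : 'I_n.+1) (t : R) (x : 'rV[R]_n) k :
  ins j t x ord0 (lift j k) = x ord0 k.
Proof. by rewrite insE liftK. Qed.

Lemma unlift_lift0 n (i k : 'I_n.+1) :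
  unlift (lift ord0 i) (lift ord0 k) = omap (lift ord0) (unlift i k).
Proof.
case: (unliftP i k) => [k'|] ->; last by rewrite unlift_none.
have -> : lift ord0 (lift i k') = lift (lift ord0 i) (lift ord0 k').
  by apply: val_inj; rewrite /= /bump /= !add1n !ltnS; case: (i <= k')%N.
exact: liftK.
Qed.

Lemma unlift_lift0_ord0 n (i : 'I_n.+1) : unlift (lift ord0 i) ord0 = Some ord0.
Proof.
case: (unliftP (lift ord0 i) ord0) => [k|] /(congr1 val) //= ek.
by congr Some; apply: val_inj; move: ek; case: k => [[|k] ?] //=; rewrite /bump addnS.
Qed.

Lemma ins_lift0_ins0 n (i : 'I_n.+1) (e t : R) (y : 'rV[R]_n) :
  ins (lift ord0 i) e (ins ord0 t y) = ins ord0 t (ins i e y).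
Proof.
apply/rowP => k; rewrite !mxE; case: (unliftP ord0 k) => [k'|] ->.
  by rewrite unlift_lift0 !mxE; case: (unlift i k') => [k''|] //=; rewrite ins_lift.
by rewrite unlift_lift0_ord0 mxE unlift_none.
Qed.

Lemma rbehead_ins0 n t (y : 'rV[R]_n) : rbehead (ins ord0 t y) = y.
Proof. by apply/rowP => k; rewrite mxE ins_lift. Qed.

Lemma ins0_rbehead n (x : 'rV[R]_n.+1) : ins ord0 (x ord0 ord0) (rbehead x) = x.
Proof.
apply/rowP => k; rewrite insE.
by case: (unliftP ord0 k) => [k'|] ->; rewrite ?liftK ?unlift_none ?mxE.
Qed.

Lemma ins_lift0_head n (i : 'I_n.+1) e (x : 'rV[R]_n.+1) :
  ins (lift ord0 i) e x ord0 ord0 = x ord0 ord0.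
Proof. by rewrite -{1}(ins0_rbehead x) ins_lift0_ins0 ins_at. Qed.

Lemma rbehead_ins_lift0 n (i : 'I_n.+1) e (x : 'rV[R]_n.+1) :
  rbehead (ins (lift ord0 i) e x) = ins i e (rbehead x).
Proof. by rewrite -{1}(ins0_rbehead x) ins_lift0_ins0 rbehead_ins0. Qed.

Lemma tailmap_id m : tailmap (@id 'rV[R]_m) = id.
Proof. by apply: funext => x; rewrite /tailmap ins0_rbehead. Qed.

Lemma tailmap_comp k m n (f : 'rV[R]_m -> 'rV[R]_n) (g : 'rV[R]_k -> 'rV[R]_m) :
  tailmap (f \o g) = tailmap f \o tailmap g.
Proof. by apply: funext => x; rewrite /tailmap /= ins_at rbehead_ins0. Qed.

Lemma tailmap_ins m (i : 'I_m.+1) e : tailmap (ins i e) = ins (lift ord0 i) e.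
Proof. by apply: funext => x; rewrite /tailmap -ins_lift0_ins0 ins0_rbehead. Qed.

Lemma tailmap_ins0 m n (f : 'rV[R]_m -> 'rV[R]_n) t :
  tailmap f \o ins ord0 t = ins ord0 t \o f.
Proof. by apply: funext => x; rewrite /tailmap /= ins_at rbehead_ins0. Qed.

Lemma tailmap_ins_lift0 m n (f : 'rV[R]_m.+1 -> 'rV[R]_n) (i : 'I_m.+1) e :
  tailmap f \o ins (lift ord0 i) e = tailmap (f \o ins i e).
Proof. by apply: funext => x; rewrite /tailmap /= ins_lift0_head rbehead_ins_lift0. Qed.

Lemma headmap_id n : headmap id = @id 'rV[R]_n.+1.
Proof. by apply: funext => x; rewrite /headmap ins0_rbehead. Qed.

Lemma headmap_ins0 n g t : headmap g \o ins ord0 t = ins ord0 (g t) :> ('rV[R]_n -> _).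
Proof. by apply: funext => x; rewrite /headmap /= ins_at rbehead_ins0. Qed.

Lemma headmap_ins_lift0 n g (i : 'I_n.+1) e :
  headmap g \o ins (lift ord0 i) e = ins (lift ord0 i) e \o headmap g.
Proof.
by apply: funext => x; rewrite /headmap /= ins_lift0_head rbehead_ins_lift0 ins_lift0_ins0.
Qed.

Lemma head2map_ins0 n g e : head2map (n:=n) g \o ins ord0 e = headmap (g e).
Proof. by apply: funext => x; rewrite /head2map /headmap /= ins_at !rbehead_ins0. Qed.

Lemma head2map_ins1 n g e :
  head2map (n:=n) g \o ins (lift ord0 ord0) e = headmap (fun t => g t e).
Proof.
apply: funext => x; rewrite /head2map /headmap /= ins_lift0_head.
by rewrite rbehead_ins_lift0 ins_at rbehead_ins0.
Qed.

Lemma head2map_ins_lift2 n g (i : 'I_n.+1) e :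
  head2map (n:=n.+1) g \o ins (lift ord0 (lift ord0 i)) e =
  ins (lift ord0 i) e \o head2map (n:=n) g.
Proof.
apply: funext => x.
by rewrite /head2map /= ins_lift0_head !rbehead_ins_lift0 ins_lift0_head ins_lift0_ins0.
Qed.

Lemma rbehead_comp_ins0 n t : @rbehead n \o ins ord0 t = id.
Proof. by apply: funext => x; rewrite /= rbehead_ins0. Qed.

Lemma rbehead_comp_ins_lift0 n (i : 'I_n.+1) e :
  @rbehead n.+1 \o ins (lift ord0 i) e = ins i e \o @rbehead n.
Proof. by apply: funext => x; rewrite /= rbehead_ins_lift0. Qed.

End CubeCoordinates.

Section StandardCombinations.
Variables (Rg : comPzRingType) (R : realType) (a b : Rg).

Definition bdc n : seq (Rg * ('rV[R]_n -> 'rV[R]_n.+1)) :=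
  flatten [seq [:: ((-1) ^+ val j * a, ins j 0); ((-1) ^+ val j * b, ins j 1)]
          | j <- enum 'I_n.+1].

Definition third_lo (t : R) : R := t / 3.
Definition third_hi (t : R) : R := (2 + t) / 3.
Definition third_mid (t : R) : R := (2 - t) / 3.

Definition subdiv1 n : seq (Rg * ('rV[R]_n.+1 -> 'rV[R]_n.+1)) :=
  [:: (1, headmap third_lo); (1, headmap third_hi); (-1, headmap third_mid)].

Definition tailc m n (c : seq (Rg * ('rV[R]_m -> 'rV[R]_n))) :
  seq (Rg * ('rV[R]_m.+1 -> 'rV[R]_n.+1)) := [seq (p.1, tailmap p.2) | p <- c].

Fixpoint subdiv n : seq (Rg * ('rV[R]_n -> 'rV[R]_n)) :=
  if n is m.+1 then compc (tailc (subdiv m)) (subdiv1 m) else [:: (1, id)].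

(* In the first coordinate, [htpy_lo] runs from the identity (x = 0) to
   [(1 + 2 y) / 3] (x = 1) and [htpy_hi] from [third_mid] to the constant [1];
   at y = 0 they start at [third_lo] and [third_hi]. *)
Definition htpy_lo (x y : R) : R := y + x * (1 - y) / 3.
Definition htpy_hi (x y : R) : R := (2 - y + x * (1 + y)) / 3.

Definition htpy1 n : seq (Rg * ('rV[R]_n.+2 -> 'rV[R]_n.+1)) :=
  [:: (1, head2map htpy_lo); (1, head2map htpy_hi)].

Fixpoint subdiv_htpy n : seq (Rg * ('rV[R]_n.+1 -> 'rV[R]_n)) :=
  if n is m.+1 then htpy1 m ++ scalec (-1) (compc (tailc (subdiv_htpy m)) (subdiv1 m.+1))
  else [::].

Definition cylc n : seq (Rg * ('rV[R]_n.+1 -> 'rV[R]_n)) := [:: (1, @rbehead R n)].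

Definition bdc_tail n (G : ('rV[R]_n.+1 -> 'rV[R]_n.+2) -> Rg) : Rg :=
  \sum_(i < n.+1) ((-1) ^+ i * a * G (ins (lift ord0 i) 0)
                   + (-1) ^+ i * b * G (ins (lift ord0 i) 1)).

Lemma evalc_bdc n G : evalc (bdc n) G =
  \sum_(j < n.+1) ((-1) ^+ j * a * G (ins j 0) + (-1) ^+ j * b * G (ins j 1)).
Proof.
rewrite /bdc evalc_flatten big_enum /=; apply: eq_bigr => j _.
by rewrite !evalc_cons evalc_nil addr0.
Qed.

Lemma evalc_bdcS n G :
  evalc (bdc n.+1) G = a * G (ins ord0 0) + b * G (ins ord0 1) - bdc_tail G.
Proof.
rewrite evalc_bdc big_ord_recl /= expr0 !mul1r /bdc_tail -sumrN; congr (_ + _).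
by apply: eq_bigr => i _; rewrite /bump /= add1n exprS !mulN1r !mulNr opprD.
Qed.

Lemma evalc_subdiv1 n G : evalc (subdiv1 n) G =
  G (headmap third_lo) + G (headmap third_hi) - G (headmap third_mid).
Proof. by rewrite /subdiv1 !evalc_cons evalc_nil addr0 !mul1r mulN1r addrA. Qed.

Lemma evalc_tailc m n (c : seq (Rg * ('rV[R]_m -> 'rV[R]_n))) G :
  evalc (tailc c) G = evalc c (fun f => G (tailmap f)).
Proof. by rewrite /evalc /tailc big_map. Qed.

Lemma evalc_subdiv0 G : evalc (subdiv 0) G = G id.
Proof. by rewrite evalc_cons evalc_nil addr0 mul1r. Qed.

Lemma evalc_subdivS m G : evalc (subdiv m.+1) G =
  evalc (subdiv m) (fun f => evalc (subdiv1 m) (fun s => G (tailmap f \o s))).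
Proof. by rewrite evalc_compc evalc_tailc. Qed.

Lemma evalc_htpy1 n G : evalc (htpy1 n) G = G (head2map htpy_lo) + G (head2map htpy_hi).
Proof. by rewrite /htpy1 !evalc_cons evalc_nil addr0 !mul1r. Qed.

Lemma evalc_subdiv_htpyS m G : evalc (subdiv_htpy m.+1) G =
  evalc (htpy1 m) G -
  evalc (subdiv_htpy m) (fun f => evalc (subdiv1 m.+1) (fun s => G (tailmap f \o s))).
Proof. by rewrite evalc_cat evalc_scalec evalc_compc evalc_tailc mulN1r. Qed.

Lemma htpy_lo0 : htpy_lo 0 = id.
Proof. by apply: funext => t; rewrite /htpy_lo !mul0r addr0. Qed.
Lemma htpy_hi0 : htpy_hi 0 = third_mid.
Proof. by apply: funext => t; rewrite /htpy_hi /third_mid mul0r addr0. Qed.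
Lemma htpy_lo1 : htpy_lo 1 = (fun t => (1 + 2 * t) / 3).
Proof. by apply: funext => t; rewrite /htpy_lo; field. Qed.
Lemma htpy_hi_1 : (fun t => htpy_hi t 1) = (fun t => (1 + 2 * t) / 3).
Proof. by apply: funext => t; rewrite /htpy_hi; field. Qed.
Lemma htpy_lo_1 : (fun t => htpy_lo t 1) = (fun _ => 1).
Proof. by apply: funext => t; rewrite /htpy_lo subrr mulr0 mul0r addr0. Qed.
Lemma htpy_hi1 : htpy_hi 1 = (fun _ => 1).
Proof. by apply: funext => t; rewrite /htpy_hi; field. Qed.
Lemma htpy_lo_0 : (fun t => htpy_lo t 0) = third_lo.
Proof. by apply: funext => t; rewrite /htpy_lo /third_lo subr0 mulr1 add0r. Qed.
Lemma htpy_hi_0 : (fun t => htpy_hi t 0) = third_hi.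
Proof. by apply: funext => t; rewrite /htpy_hi /third_hi subr0 addr0 mulr1. Qed.

Lemma third_lo0 : third_lo 0 = 0. Proof. by rewrite /third_lo mul0r. Qed.
Lemma third_mid0 : third_mid 0 = third_hi 0.
Proof. by rewrite /third_mid /third_hi subr0 addr0. Qed.
Lemma third_mid1 : third_mid 1 = third_lo 1. Proof. by rewrite /third_mid /third_lo; lra. Qed.
Lemma third_hi1 : third_hi 1 = 1. Proof. by rewrite /third_hi; lra. Qed.

Lemma sign_bump i : (-1) ^+ bump 0 i = - (-1) ^+ i :> Rg.
Proof. by rewrite /bump /= add1n exprS mulN1r. Qed.

Lemma htpy1_bdc n (w : ('rV[R]_n.+1 -> 'rV[R]_n.+1) -> Rg) :
  evalc (htpy1 n) (fun f => evalc (bdc n.+1) (fun g => w (f \o g))) =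
  a * w id - a * evalc (subdiv1 n) w +
  \sum_(i < n) ((-1) ^+ i * a *
                  evalc (htpy1 n) (fun f => w (f \o ins (lift ord0 (lift ord0 i)) 0))
              + (-1) ^+ i * b *
                  evalc (htpy1 n) (fun f => w (f \o ins (lift ord0 (lift ord0 i)) 1))).
Proof.
under eq_bigr do rewrite !evalc_htpy1.
rewrite evalc_htpy1 !evalc_bdcS /bdc_tail !big_ord_recl /= !expr0 !mul1r.
rewrite !head2map_ins0 !head2map_ins1 htpy_lo0 htpy_hi0 htpy_lo1 htpy_hi_1.
rewrite htpy_lo_1 htpy_hi1 htpy_lo_0 htpy_hi_0 headmap_id evalc_subdiv1.
set S1 := \sum_(i < n) ((-1) ^+ bump 0 i * a * w (head2map htpy_lo \o _) + _).
set S2 := \sum_(i < n) ((-1) ^+ bump 0 i * a * w (head2map htpy_hi \o _) + _).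
set S := \sum_(i < n) _.
have -> : S = - S1 - S2.
  rewrite /S /S1 /S2 -!sumrN -big_split /=; apply: eq_bigr => i _.
  by rewrite sign_bump; ring.
ring.
Qed.

Lemma htpy1_ins_lift2 n (i : 'I_n.+1) e (w : ('rV[R]_n.+2 -> 'rV[R]_n.+2) -> Rg) :
  evalc (htpy1 n.+1) (fun f => w (f \o ins (lift ord0 (lift ord0 i)) e)) =
  evalc (htpy1 n) (fun f => w (ins (lift ord0 i) e \o f)).
Proof. by rewrite !evalc_htpy1 !head2map_ins_lift2. Qed.

Lemma tailmap_headmap_ins_lift0 k p (f : 'rV[R]_k.+1 -> 'rV[R]_p) g (i : 'I_k.+1) e :
  (tailmap f \o headmap g) \o ins (lift ord0 i) e = tailmap (f \o ins i e) \o headmap g.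
Proof. by rewrite -compA headmap_ins_lift0 compA tailmap_ins_lift0. Qed.

Lemma tailmap_headmap_ins0 k p (f : 'rV[R]_k -> 'rV[R]_p) g e :
  (tailmap f \o headmap g) \o ins ord0 e = ins ord0 (g e) \o f.
Proof. by rewrite -compA headmap_ins0 tailmap_ins0. Qed.

(* The faces of the subdivided first coordinate telescope: only the outer
   endpoints [third_lo 0 = 0] and [third_hi 1 = 1] survive. *)
Lemma subdiv1_bdcS k p (f : 'rV[R]_k.+1 -> 'rV[R]_p)
    (w : ('rV[R]_k.+1 -> 'rV[R]_p.+1) -> Rg) :
  evalc (subdiv1 k.+1) (fun s => evalc (bdc k.+1) (fun g => w (tailmap f \o s \o g))) =
  a * w (ins ord0 0 \o f) + b * w (ins ord0 1 \o f)
  - evalc (bdc k) (fun g => evalc (subdiv1 k) (fun s => w (tailmap (f \o g) \o s))).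
Proof.
rewrite evalc_bdc; under eq_bigr do rewrite !evalc_subdiv1.
rewrite evalc_subdiv1 !evalc_bdcS /bdc_tail !tailmap_headmap_ins0.
rewrite third_lo0 third_mid0 third_mid1 third_hi1.
set S0 := \sum_(i < k.+1) (_ * w ((tailmap f \o headmap third_lo) \o _) + _).
set S1 := \sum_(i < k.+1) (_ * w ((tailmap f \o headmap third_hi) \o _) + _).
set S2 := \sum_(i < k.+1) (_ * w ((tailmap f \o headmap third_mid) \o _) + _).
set S := \sum_(i < k.+1) _.
have -> : S = S0 + S1 - S2.
  rewrite /S /S0 /S1 /S2 -big_split -sumrB /=; apply: eq_bigr => i _.
  by rewrite !tailmap_headmap_ins_lift0; ring.
ring.
Qed.

Lemma subdiv1_bdc0 p (f : 'rV[R]_0 -> 'rV[R]_p) (w : ('rV[R]_0 -> 'rV[R]_p.+1) -> Rg) :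
  evalc (subdiv1 0) (fun s => evalc (bdc 0) (fun g => w (tailmap f \o s \o g))) =
  a * w (ins ord0 0 \o f) + b * w (ins ord0 1 \o f).
Proof.
rewrite evalc_subdiv1 !evalc_bdc !big_ord1 /= expr0 !mul1r !tailmap_headmap_ins0.
by rewrite third_lo0 third_mid0 third_mid1 third_hi1; ring.
Qed.

End StandardCombinations.

Section ChainIdentities.
Variables (Rg : comPzRingType) (R : realType) (a b : Rg).

Notation bdc := (@bdc Rg R a b).
Notation subdiv := (@subdiv Rg R).
Notation subdiv1 := (@subdiv1 Rg R).
Notation subdiv_htpy := (@subdiv_htpy Rg R).
Notation htpy1 := (@htpy1 Rg R).

Lemma tailmap_ins_comp k m (i : 'I_k.+1) e (h : 'rV[R]_m -> 'rV[R]_k)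
    (s : 'rV[R]_m.+1 -> 'rV[R]_m.+1) :
  tailmap (ins i e \o h) \o s = ins (lift ord0 i) e \o (tailmap h \o s).
Proof. by rewrite tailmap_comp tailmap_ins. Qed.

Lemma subdiv_bdc n w :
  evalc (compc (subdiv n.+1) (bdc n)) w = evalc (compc (bdc n) (subdiv n)) w.
Proof.
elim: n w => [|m IH] w; rewrite [LHS]evalc_compc [RHS]evalc_compc evalc_subdivS.
  under evalc_ext => f do rewrite subdiv1_bdc0.
  by rewrite evalcD !evalcZ evalc_bdc big_ord1 /= expr0 !mul1r.
under evalc_ext => f do rewrite subdiv1_bdcS.
rewrite evalcB evalcD !evalcZ.
have := IH (fun f => evalc (subdiv1 m) (fun s => w (tailmap f \o s))).
rewrite [LHS]evalc_compc [RHS]evalc_compc => ->.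
rewrite evalc_bdcS /bdc_tail evalc_bdc; congr (_ - _).
apply: eq_bigr => i _; rewrite !evalc_subdivS.
by congr (_ * _ + _ * _); do 2![apply: evalc_ext => ?]; rewrite tailmap_ins_comp.
Qed.

Lemma subdiv_htpy_bdc m w :
  evalc (compc (subdiv_htpy m.+1) (bdc m.+1)) w =
  a * w id - a * evalc (subdiv m.+1) w - evalc (compc (bdc m) (subdiv_htpy m)) w.
Proof.
elim: m w => [|m IH] w.
  rewrite evalc_compc evalc_subdiv_htpyS htpy1_bdc big_ord0 addr0 evalc_subdivS.
  rewrite evalc_subdiv0 tailmap_id [evalc (subdiv_htpy 0) _]evalc_nil subr0.
  by rewrite evalc_compc (evalc_ext _ (fun f => evalc_nil _)) evalc0 subr0.
rewrite evalc_compc evalc_subdiv_htpyS htpy1_bdc.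
under [X in _ - X = _]evalc_ext => f do rewrite subdiv1_bdcS.
rewrite evalcB evalcD !evalcZ.
have := IH (fun f => evalc (subdiv1 m.+1) (fun s => w (tailmap f \o s))).
rewrite evalc_compc => ->.
under eq_bigr do rewrite !htpy1_ins_lift2.
rewrite [evalc (subdiv m.+2) w]evalc_subdivS tailmap_id.
rewrite (@evalc_ext _ _ (subdiv1 m.+1) (fun s => w (id \o s)) w) //.
rewrite [evalc (compc (bdc m) _) _]evalc_compc [evalc (compc (bdc m.+1) _) _]evalc_compc.
rewrite evalc_bdc evalc_bdcS /bdc_tail.
under [X in _ = _ - (_ - X)]eq_bigr do rewrite !evalc_subdiv_htpyS.
set SH := \sum_(i < m.+1) (_ * evalc (htpy1 m) _ + _).
set ST := \sum_(j < m.+1) (_ * evalc (subdiv_htpy m) _ + _).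
set SR := \sum_(i < m.+1) _.
have -> : SR = SH - ST.
  rewrite /SH /ST /SR -sumrB; apply: eq_bigr => i _.
  have tailE e : evalc (subdiv_htpy m) (fun f => evalc (subdiv1 m.+1)
        (fun s => w (ins (lift ord0 i) e \o (tailmap f \o s)))) =
      evalc (subdiv_htpy m) (fun g => evalc (subdiv1 m.+1)
        (fun s => w (tailmap (ins i e \o g) \o s))).
    by do 2![apply: evalc_ext => ?]; rewrite tailmap_ins_comp.
  by rewrite !tailE; ring.
ring.
Qed.

Notation cylc := (@cylc Rg R).

Lemma cylc_bdc0 w : evalc (compc (cylc 0) (bdc 0)) w = (a + b) * w id.
Proof.
rewrite evalc_compc /cylc evalc_cons evalc_nil addr0 mul1r evalc_bdc big_ord1 /=.
by rewrite expr0 !mul1r !rbehead_comp_ins0 mulrDl.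
Qed.

Lemma cylc_bdcS m w :
  evalc (compc (cylc m.+1) (bdc m.+1)) w =
  (a + b) * w id - evalc (compc (bdc m) (cylc m)) w.
Proof.
rewrite !evalc_compc /cylc !evalc_cons !evalc_nil !addr0 !mul1r evalc_bdcS /bdc_tail.
rewrite !rbehead_comp_ins0 mulrDl; congr (_ - _); rewrite evalc_bdc.
apply: eq_bigr => i _; rewrite /= !evalc_cons !evalc_nil !addr0 !mul1r.
by rewrite !rbehead_comp_ins_lift0.
Qed.

End ChainIdentities.

Section SingularChains.
Variables (Rg : comPzRingType) (R : realType) (X : topologicalType) (a b : Rg).

Definition third (k : 'I_3) (t : R) : R := (e_of R k + v_of R k * t) / 3.

Definition ffun_cons n (k : 'I_3) (f : {ffun 'I_n -> 'I_3}) : {ffun 'I_n.+1 -> 'I_3} :=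
  [ffun i => if unlift ord0 i is Some j then f j else k].

Lemma ffun_cons0 n k (f : {ffun 'I_n -> 'I_3}) : ffun_cons k f ord0 = k.
Proof. by rewrite ffunE unlift_none. Qed.

Lemma ffun_cons_lift0 n k (f : {ffun 'I_n -> 'I_3}) i : ffun_cons k f (lift ord0 i) = f i.
Proof. by rewrite ffunE liftK. Qed.

Lemma big_ffun_cons n (G : {ffun 'I_n.+1 -> 'I_3} -> Rg) :
  \sum_(F : {ffun 'I_n.+1 -> 'I_3}) G F =
  \sum_(k : 'I_3) \sum_(f : {ffun 'I_n -> 'I_3}) G (ffun_cons k f).
Proof.
rewrite pair_big /= (reindex (fun p => ffun_cons p.1 p.2)) //=.
exists (fun F => (F ord0, [ffun j => F (lift ord0 j)])).
  move=> [k f] _ /=; rewrite ffun_cons0; congr pair.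
  by apply/ffunP => j; rewrite ffunE ffun_cons_lift0.
move=> F _; apply/ffunP => i; rewrite ffunE /=.
by case: (unliftP ord0 i) => [j|] ->; rewrite ?ffunE.
Qed.

Lemma tailmap_h_map n k (f : {ffun 'I_n -> 'I_3}) :
  tailmap (h_map f) \o headmap (third k) = h_map (ffun_cons k f).
Proof.
apply: funext => x; apply/rowP => i; rewrite /= /tailmap /headmap !mxE ffunE.
by case: (unliftP ord0 i) => [j|] ->; rewrite ?liftK ?unlift_none // rbehead_ins0 !mxE.
Qed.

Lemma third_ord0 : third ord0 = @third_lo R.
Proof. by apply: funext => t; rewrite /third /third_lo /= add0r mul1r. Qed.

Lemma third_ord1 : third (lift ord0 ord0) = @third_hi R.
Proof. by apply: funext => t; rewrite /third /third_hi /= mul1r. Qed.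

Lemma third_ord2 : third (lift ord0 (lift ord0 ord0)) = @third_mid R.
Proof. by apply: funext => t; rewrite /third /third_mid /= mulN1r. Qed.

Lemma evalc_subdiv n (G : ('rV[R]_n -> 'rV[R]_n) -> Rg) :
  evalc (subdiv Rg R n) G =
  \sum_(f : {ffun 'I_n -> 'I_3}) (\prod_(i < n) vR_of Rg (f i)) * G (h_map f).
Proof.
elim: n G => [|n IH] G.
  rewrite evalc_subdiv0 (big_pred1 [ffun i => ord0]); last first.
    by move=> f /=; apply/esym/eqP/ffunP => -[].
  by rewrite big_ord0 mul1r; congr G; apply: funext => x; apply/rowP => -[].
rewrite evalc_subdivS IH big_ffun_cons exchange_big /=; apply: eq_bigr => f _.
rewrite evalc_subdiv1 !big_ord_recl big_ord0 addr0 /=.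
have prodE k : \prod_(i < n) vR_of Rg (ffun_cons k f (lift ord0 i)) =
                \prod_(i < n) vR_of Rg (f i).
  by apply: eq_bigr => i _; rewrite ffun_cons_lift0.
rewrite -!tailmap_h_map third_ord0 third_ord1 third_ord2 !prodE !ffun_cons0 /vR_of /=.
ring.
Qed.

Lemma evalc_SD_cube n c (T : 'rV[R]_n -> X) w :
  evalc (SD_cube c T) w = - (c * evalc (subdiv Rg R n) (fun f => w (T \o f))).
Proof.
case: n T w => [|n] T w.
  by rewrite /= evalc_subdiv0 !evalc_cons !evalc_nil !addr0 mulrN1 mulNr.
rewrite evalc_subdiv /evalc /= big_map big_enum /= mulr_sumr -sumrN.
by apply: eq_bigr => f _ /=; rewrite mulrN mulNr mulrA.
Qed.

Lemma evalc_SD n (l : chain Rg R X n) w :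
  evalc (SD l) w = - evalc (compc l (subdiv Rg R n)) w.
Proof.
rewrite /SD evalc_flatten evalc_compc [in RHS]/evalc -sumrN.
by apply: eq_bigr => p _; rewrite evalc_SD_cube.
Qed.

Lemma evalc_bd n (l : chain Rg R X n.+1) w :
  evalc (bd a b l) w = evalc (compc l (bdc R a b n)) w.
Proof.
rewrite /bd evalc_flatten evalc_compc [RHS]/evalc; apply: eq_bigr => p _.
rewrite evalc_flatten evalc_bdc big_enum /= mulr_sumr; apply: eq_bigr => j _.
by rewrite !evalc_cons evalc_nil addr0 /=; ring.
Qed.

Definition cube_indicator n (S T : 'rV[R]_n -> X) : Rg :=
  if `[< same_cube T S >] then 1 else 0.

Lemma coef_evalc n (l : chain Rg R X n) S : coef l S = evalc l (cube_indicator S).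
Proof.
rewrite /coef /evalc; apply: eq_bigr => p _; rewrite /cube_indicator.
by case: ifP => _; rewrite ?mulr1 ?mulr0.
Qed.

Lemma same_cube_sym n (T S : 'rV[R]_n -> X) : same_cube T S -> same_cube S T.
Proof. by move=> eTS x Ix; rewrite eTS. Qed.

Lemma same_cube_trans n (T S U : 'rV[R]_n -> X) :
  same_cube T S -> same_cube S U -> same_cube T U.
Proof. by move=> eTS eSU x Ix; rewrite eTS // eSU. Qed.

(* Group the terms of [l] by the class of their cube: each class contributes
   its total coefficient, which is 0. *)
Lemma evalc_coef_eq0 n (l : chain Rg R X n) (g : ('rV[R]_n -> X) -> Rg) :
  (forall S, coef l S = 0) -> (forall T T', same_cube T T' -> g T = g T') ->
  evalc l g = 0.
Proof.
move=> l0 gE; have [m] := ubnP (size l); elim: m l l0 => // m IH l l0 lm.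
case: l l0 lm => [|p l] l0 lm; first by rewrite evalc_nil.
pose P (q : Rg * ('rV[R]_n -> X)) := `[< same_cube q.2 p.2 >].
rewrite /evalc (bigID P) /=.
have -> : \sum_(q <- p :: l | P q) q.1 * g q.2 = coef (p :: l) p.2 * g p.2.
  rewrite /coef big_distrl /= big_mkcond; apply: eq_bigr => q _; rewrite /P.
  by case: asboolP => h; [rewrite (gE _ _ h) | rewrite mul0r].
rewrite l0 mul0r add0r -big_filter; apply: IH; last first.
  rewrite /= /P; case: asboolP => [_|/(_ (fun _ _ => erefl))] //.
  by rewrite /= size_filter; exact: leq_ltn_trans (count_size _ l) lm.
move=> S; rewrite /coef big_filter.
case: (asboolP (same_cube p.2 S)) => pS.
  rewrite big1 // => q; rewrite /P /=; case: asboolP => // qp _.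
  by case: asboolP => // qS; case: qp; apply: same_cube_trans qS (same_cube_sym pS).
move: (l0 S); rewrite /coef (bigID P) /= big1 ?add0r // => q.
rewrite /P; case: asboolP => // qp _; case: asboolP => // qS.
by case: pS; apply: same_cube_trans (same_cube_sym qp) qS.
Qed.

End SingularChains.

Lemma continuous_within_comp (Y Z W : topologicalType) (A : set Y) (B : set Z)
    (phi : Y -> Z) (T : Z -> W) :
  continuous phi -> (forall y, A y -> B (phi y)) ->
  {within B, continuous T} -> {within A, continuous (T \o phi)}.
Proof.
move=> cphi AB /(@subspace_continuousP _ B _ T) cT.
apply/(@subspace_continuousP _ A _ (T \o phi)) => x Ax.
apply: (@cvg_comp _ _ _ phi T _ (within B (nbhs (phi x)))); last exact: cT _ (AB _ Ax).
move=> S /= BS; rewrite /within /=.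
have : nbhs x (fun y => B (phi y) -> S (phi y)) := cphi x _ BS.
by apply: filterS => y Sy Ay; exact: Sy (AB _ Ay).
Qed.

Section CubicalMaps.
Variable R : realType.
Implicit Types Y : topologicalType.

Lemma continuous_mx Y m n (f : Y -> 'M[R]_(m, n)) :
  (forall i j, continuous (fun y => f y i j)) -> continuous f.
Proof.
move=> cf y A [P PN sPA]; apply: (filterS sPA).
apply: filter_forall => i; apply: filter_forall => j.
exact: (cf i j y (P i j) (PN i j)).
Qed.

Lemma continuous_addR Y (u v : Y -> R) :
  continuous u -> continuous v -> continuous (fun y => u y + v y).
Proof. by move=> cu cv y; exact: (@continuousD R R^o Y u v y (cu y) (cv y)). Qed.

Lemma continuous_mulR Y (u v : Y -> R) :
  continuous u -> continuous v -> continuous (fun y => u y * v y).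
Proof. by move=> cu cv y; exact: (@continuousM R Y u v y (cu y) (cv y)). Qed.

Lemma continuous_cstR Y (c : R) : continuous (fun _ : Y => c).
Proof. by move=> y; apply: cst_continuous. Qed.

Lemma continuous_subR Y (u v : Y -> R) :
  continuous u -> continuous v -> continuous (fun y => u y - v y).
Proof. by move=> cu cv y; exact: (@continuousB R R^o Y u v y (cu y) (cv y)). Qed.

Lemma continuous_coord m (j : 'I_m) : continuous (fun x : 'rV[R]_m => x ord0 j).
Proof. exact: coord_continuous. Qed.

Lemma continuous_ins Y n (j : 'I_n.+1) (t : Y -> R) (y : Y -> 'rV[R]_n) :
  continuous t -> continuous y -> continuous (fun z => ins j (t z) (y z)).
Proof.
move=> ct cy; apply: continuous_mx => i k; rewrite (ord1 i).
have -> : (fun z => ins j (t z) (y z) ord0 k) =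
    (fun z => if unlift j k is Some k' then y z ord0 k' else t z).
  by apply: funext => z; rewrite insE.
case: (unlift j k) => [k'|]; last exact: ct.
move=> z; apply: (@continuous_comp _ _ _ y (fun x : 'rV[R]_n => x ord0 k')); first exact: cy.
exact: continuous_coord.
Qed.

Lemma continuous_rbehead n : continuous (@rbehead R n).
Proof.
apply: continuous_mx => i k; rewrite (ord1 i).
have -> : (fun x : 'rV[R]_n.+1 => rbehead x ord0 k) = (fun x => x ord0 (lift ord0 k)).
  by apply: funext => x; rewrite mxE.
exact: continuous_coord.
Qed.

Definition cubical m n (f : 'rV[R]_m -> 'rV[R]_n) :=
  continuous f /\ forall x, Icube x -> Icube (f x).

Lemma Icube_ins n (j : 'I_n.+1) t (y : 'rV[R]_n) :
  0 <= t <= 1 -> Icube y -> Icube (ins j t y).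
Proof. by move=> t01 Iy k; rewrite insE; case: (unlift j k). Qed.

Lemma Icube_rbehead n (x : 'rV[R]_n.+1) : Icube x -> Icube (rbehead x).
Proof. by move=> Ix k; rewrite mxE. Qed.

Lemma cubical_comp k m n (f : 'rV[R]_m -> 'rV[R]_n) (g : 'rV[R]_k -> 'rV[R]_m) :
  cubical f -> cubical g -> cubical (f \o g).
Proof.
move=> [cf If] [cg Ig]; split.
  by move=> x; apply: continuous_comp; [exact: cg | exact: cf].
by move=> x Ix; apply: If; apply: Ig.
Qed.

Lemma cubical_id n : cubical (@id 'rV[R]_n).
Proof. by split => // x; exact: cvg_id. Qed.

Lemma cubical_ins n (j : 'I_n.+1) t : 0 <= t <= 1 -> cubical (ins j t).
Proof.
move=> t01; split; last by move=> x Ix; apply: Icube_ins.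
apply: (@continuous_ins _ _ _ (fun _ => t) id); first exact: continuous_cstR.
by move=> x; exact: cvg_id.
Qed.

Lemma cubical_rbehead n : cubical (@rbehead R n).
Proof. by split; [exact: continuous_rbehead | move=> x; exact: Icube_rbehead]. Qed.

Lemma cubical_tailmap m n (f : 'rV[R]_m -> 'rV[R]_n) : cubical f -> cubical (tailmap f).
Proof.
move=> [cf If]; split.
  apply: continuous_ins; first exact: continuous_coord.
  move=> z; apply: (@continuous_comp _ _ _ (@rbehead R m) f).
    exact: continuous_rbehead.
  exact: cf.
by move=> x Ix; apply: Icube_ins; [exact: Ix | apply: If; apply: Icube_rbehead].
Qed.

Lemma cubical_headmap n (g : R -> R) : continuous g ->
  (forall t, 0 <= t <= 1 -> 0 <= g t <= 1) -> cubical (@headmap R n g).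
Proof.
move=> cg g01; split.
  apply: continuous_ins; last exact: continuous_rbehead.
  move=> z; apply: (@continuous_comp _ _ _ (fun x : 'rV[R]_n.+1 => x ord0 ord0) g).
    exact: continuous_coord.
  exact: cg.
by move=> x Ix; apply: Icube_ins; [exact: g01 (Ix ord0) | exact: Icube_rbehead].
Qed.

Lemma cubical_head2map n (g : R -> R -> R) :
  (forall Y (u v : Y -> R), continuous u -> continuous v ->
     continuous (fun y => g (u y) (v y))) ->
  (forall s t, 0 <= s <= 1 -> 0 <= t <= 1 -> 0 <= g s t <= 1) ->
  cubical (@head2map R n g).
Proof.
move=> cg g01; split.
  apply: continuous_ins.
    apply: cg; first exact: continuous_coord.
    move=> z; apply: (@continuous_comp _ _ _ (@rbehead R n.+1) (fun x => x ord0 ord0)).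
      exact: continuous_rbehead.
    exact: continuous_coord.
  move=> z; apply: (@continuous_comp _ _ _ (@rbehead R n.+1) (@rbehead R n));
    exact: continuous_rbehead.
move=> x Ix; apply: Icube_ins; last by do 2 apply: Icube_rbehead.
by apply: g01; [exact: Ix | rewrite mxE; exact: Ix].
Qed.

Lemma cubical_h_map n (f : {ffun 'I_n -> 'I_3}) : cubical (@h_map R n f).
Proof.
split.
  apply: continuous_mx => i j; rewrite (ord1 i).
  have -> : (fun x : 'rV[R]_n => h_map f x ord0 j) =
      (fun x => (e_of R (f j) + v_of R (f j) * x ord0 j) / 3).
    by apply: funext => x; rewrite mxE.
  apply: continuous_mulR; last exact: continuous_cstR.
  apply: continuous_addR; first exact: continuous_cstR.
  by apply: continuous_mulR; [exact: continuous_cstR | exact: continuous_coord].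
move=> x Ix j; rewrite mxE; move: (Ix j) => /andP [x0 x1].
by rewrite /e_of /v_of; case: (f j) => [[|[|[|k]]] ?] //=; apply/andP; split; lra.
Qed.

End CubicalMaps.

Section CubicalCombinations.
Variables (Rg : comPzRingType) (R : realType).

Definition all_cubical m n (c : seq (Rg * ('rV[R]_m -> 'rV[R]_n))) :=
  forall p, List.In p c -> cubical p.2.

Lemma all_cubical_cat m n (c d : seq (Rg * ('rV[R]_m -> 'rV[R]_n))) :
  all_cubical c -> all_cubical d -> all_cubical (c ++ d).
Proof. by move=> cc cd p /(List.in_app_or _ _ _) [/cc|/cd]. Qed.

Lemma all_cubical_scalec m n r (c : seq (Rg * ('rV[R]_m -> 'rV[R]_n))) :
  all_cubical c -> all_cubical (scalec r c).
Proof. by move=> cc p /(List.in_map_iff _ _ _) [q [<- /cc]]. Qed.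

Lemma all_cubical_compc k m n (c : seq (Rg * ('rV[R]_m -> 'rV[R]_n)))
    (d : seq (Rg * ('rV[R]_k -> 'rV[R]_m))) :
  all_cubical c -> all_cubical d -> all_cubical (compc c d).
Proof.
move=> cc cd p /(List.in_concat _ _) [s [/(List.in_map_iff _ _ _) [q [<- qc]]]].
by move=> /(List.in_map_iff _ _ _) [r [<- rd]]; exact: cubical_comp (cc _ qc) (cd _ rd).
Qed.

Lemma all_cubical_tailc m n (c : seq (Rg * ('rV[R]_m -> 'rV[R]_n))) :
  all_cubical c -> all_cubical (tailc c).
Proof. by move=> cc p /(List.in_map_iff _ _ _) [q [<- /cc /cubical_tailmap]]. Qed.

Lemma all_cubical_subdiv1 n : all_cubical (subdiv1 Rg R n).
Proof.
have cid : continuous (@id R) by move=> x; exact: cvg_id.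
have c3 := @continuous_cstR R R 3^-1.
move=> p /= [<-|[<-|[<-|[]]]]; apply: cubical_headmap.
- by rewrite /third_lo; apply: continuous_mulR.
- by move=> t; rewrite /third_lo; lra.
- rewrite /third_hi; apply: continuous_mulR => //.
  exact/continuous_addR/cid/continuous_cstR.
- by move=> t; rewrite /third_hi; lra.
- rewrite /third_mid; apply: continuous_mulR => //.
  exact/continuous_subR/cid/continuous_cstR.
- by move=> t; rewrite /third_mid; lra.
Qed.

Lemma all_cubical_htpy1 n : all_cubical (htpy1 Rg R n).
Proof.
move=> p /= [<-|[<-|[]]] /=; apply: cubical_head2map.
- move=> Y u v cu cv; rewrite /htpy_lo; apply: continuous_addR => //.
  apply: continuous_mulR; last exact: continuous_cstR.
  by apply: continuous_mulR => //; apply: continuous_subR => //; apply: continuous_cstR.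
- by move=> s t /andP [s0 s1] /andP [t0 t1]; rewrite /htpy_lo; apply/andP; split; nra.
- move=> Y u v cu cv; rewrite /htpy_hi; apply: continuous_mulR; last exact: continuous_cstR.
  apply: continuous_addR; first by apply: continuous_subR => //; apply: continuous_cstR.
  by apply: continuous_mulR => //; apply: continuous_addR => //; apply: continuous_cstR.
- by move=> s t /andP [s0 s1] /andP [t0 t1]; rewrite /htpy_hi; apply/andP; split; nra.
Qed.

Lemma all_cubical_subdiv n : all_cubical (subdiv Rg R n).
Proof.
elim: n => [|n IH]; first by move=> p /= [<-|[]]; exact: cubical_id.
by apply: all_cubical_compc; [exact: all_cubical_tailc | exact: all_cubical_subdiv1].
Qed.

Lemma all_cubical_subdiv_htpy n : all_cubical (subdiv_htpy Rg R n).
Proof.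
elim: n => [|n IH] //; apply: all_cubical_cat; first exact: all_cubical_htpy1.
exact/all_cubical_scalec/all_cubical_compc/all_cubical_subdiv1/all_cubical_tailc.
Qed.

Lemma all_cubical_cylc n : all_cubical (cylc Rg R n).
Proof. by move=> p /= [<-|[]]; exact: cubical_rbehead. Qed.

End CubicalCombinations.

Section Homology.
Variables (Rg : comPzRingType) (R : realType) (X : topologicalType) (a b : Rg).

Notation chain := (chain Rg R X).
Notation homologous := (homologous a b).

Lemma valid_cat n (u v : chain n) : valid u -> valid v -> valid (u ++ v).
Proof. by move=> vu vv p /(List.in_app_or _ _ _) [/vu|/vv]. Qed.

Lemma valid_scale n r (u : chain n) : valid u -> valid (scale r u).
Proof. by move=> vu p /(List.in_map_iff _ _ _) [q [<- /vu]]. Qed.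

Lemma valid_compc n m (u : chain n) (c : seq (Rg * ('rV[R]_m -> 'rV[R]_n))) :
  valid u -> all_cubical c -> valid (compc u c).
Proof.
move=> vu cc p /(List.in_concat _ _) [s [/(List.in_map_iff _ _ _) [q [<- qu]]]].
move=> /(List.in_map_iff _ _ _) [r [<- rc]]; have [cr Ir] := cc _ rc.
exact: continuous_within_comp cr Ir (vu _ qu).
Qed.

Lemma valid_SD_cube n (c : Rg) (T : 'rV[R]_n -> X) :
  {within Icube (n:=n), continuous T} -> valid (SD_cube c T).
Proof.
case: n T => [|n] T cT p /=; first by case=> [<-|[]].
move=> /(List.in_map_iff _ _ _) [f [<- _]]; have [cf If] := cubical_h_map R f.
exact: continuous_within_comp cf If cT.
Qed.

Lemma valid_SD n (u : chain n) : valid u -> valid (SD u).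
Proof.
move=> vu p /(List.in_concat _ _) [s [/(List.in_map_iff _ _ _) [q [<- qu]]]].
exact: valid_SD_cube (vu _ qu) p.
Qed.

Lemma coef_cat n (x y : chain n) S : coef (x ++ y) S = coef x S + coef y S.
Proof. by rewrite /coef big_cat. Qed.

Lemma coef_scale n r (x : chain n) S : coef (scale r x) S = r * coef x S.
Proof.
rewrite /coef /scale big_map mulr_sumr; apply: eq_bigr => p _ /=.
by case: ifP; rewrite ?mulr0.
Qed.

Lemma coef_nil n (S : 'rV[R]_n -> X) : coef ([::] : chain n) S = 0.
Proof. by rewrite /coef big_nil. Qed.

Lemma bd_cat n (x y : chain n.+1) : bd a b (x ++ y) = bd a b x ++ bd a b y.
Proof. by rewrite /bd map_cat flatten_cat. Qed.

Lemma coef_bd_scale n r (w : chain n.+1) S :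
  coef (bd a b (scale r w)) S = r * coef (bd a b w) S.
Proof. by rewrite !coef_evalc !evalc_bd !evalc_compc -evalc_scalec. Qed.

Lemma homologous_coef n (x y : chain n) :
  (forall S, coef x S = coef y S) -> homologous x y.
Proof. by move=> exy; exists [::]; split=> // S; rewrite exy subrr coef_nil. Qed.

Lemma homologous_add n (x y x1 y1 x2 y2 : chain n) :
  homologous x1 y1 -> homologous x2 y2 ->
  (forall S, coef x S - coef y S = (coef x1 S - coef y1 S) + (coef x2 S - coef y2 S)) ->
  homologous x y.
Proof.
move=> [w1 [v1 h1]] [w2 [v2 h2]] exy; exists (w1 ++ w2); split; first exact: valid_cat.
by move=> S; rewrite bd_cat coef_cat h1 h2 exy.
Qed.

Lemma homologous_sym n (x y : chain n) : homologous x y -> homologous y x.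
Proof.
move=> [w [vw h]]; exists (scale (-1) w); split; first exact: valid_scale.
by move=> S; rewrite coef_bd_scale h mulN1r opprB.
Qed.

Lemma homologous_scale n r (x y : chain n) :
  homologous x y -> homologous (scale r x) (scale r y).
Proof.
move=> [w [vw h]]; exists (scale r w); split; first exact: valid_scale.
by move=> S; rewrite coef_bd_scale h !coef_scale mulrBr.
Qed.

(* Precomposition respects [same_cube] because cubical maps preserve [0,1]^m. *)
Lemma evalc_compc_coef0 n m (l : chain n) (c : seq (Rg * ('rV[R]_m -> 'rV[R]_n))) S :
  (forall S', coef l S' = 0) -> all_cubical c ->
  evalc (compc l c) (cube_indicator Rg S) = 0.
Proof.
move=> l0 cc; rewrite evalc_compc; apply: evalc_coef_eq0 => // T T' eT.
apply: evalc_ext_in => p /cc [_ Ip]; rewrite /cube_indicator.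
congr (if _ then _ else _); apply: asbool_equiv_eq.
by split=> eS x Ix; rewrite -(eS x Ix) /= eT //; apply: Ip.
Qed.

Lemma cycle_compc_bdc n (u : chain n.+1) :
  is_cycle a b u -> forall S, coef (compc u (bdc R a b n)) S = 0.
Proof. by move=> cu S; rewrite coef_evalc -evalc_bd -coef_evalc. Qed.

Lemma is_cycle_SD n (u : chain n) : is_cycle a b u -> is_cycle a b (SD u).
Proof.
case: n u => [//|n] u cu S; rewrite coef_evalc evalc_bd evalc_compc evalc_SD.
rewrite -evalc_compc evalc_compcA evalc_compc.
under evalc_ext => T do rewrite subdiv_bdc.
rewrite -evalc_compc -evalc_compcA evalc_compc_coef0 ?oppr0 //.
  exact: cycle_compc_bdc.
exact: all_cubical_subdiv.
Qed.

Lemma valid_cycle_iter_SD n (u : chain n) k :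
  valid u -> is_cycle a b u ->
  valid (iter k (@SD Rg R X n) u) /\ is_cycle a b (iter k (@SD Rg R X n) u).
Proof.
move=> vu cu; elim: k => [|k [vk ck]] //=.
by split; [exact: valid_SD | exact: is_cycle_SD].
Qed.

Lemma homologous_SD n (u : chain n) :
  valid u -> is_cycle a b u -> homologous (scale a (SD u)) (scale (- a) u).
Proof.
case: n u => [|n] u vu cu.
  apply: homologous_coef => S; rewrite !coef_scale !coef_evalc evalc_SD evalc_compc.
  by under evalc_ext => T do rewrite evalc_subdiv0; rewrite mulrN mulNr.
exists (compc u (subdiv_htpy Rg R n.+1)); split.
  by apply: valid_compc vu _; exact: all_cubical_subdiv_htpy.
move=> S; rewrite !coef_scale coef_evalc evalc_bd evalc_compcA evalc_compc.
under evalc_ext => T do rewrite subdiv_htpy_bdc.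
rewrite !evalcB !evalcZ.
rewrite -!evalc_compc -evalc_compcA (evalc_compc_coef0 (l := compc u (bdc R a b n)));
  last 2 first.
- exact: cycle_compc_bdc.
- exact: all_cubical_subdiv_htpy.
by rewrite subr0 [coef (SD u) S]coef_evalc evalc_SD coef_evalc; ring.
Qed.

(* The cylinder [u \o rbehead] has boundary [(a + b) u] on a cycle [u]. *)
Lemma homologous_scale_addr0 n (u : chain n) :
  valid u -> is_cycle a b u -> homologous (scale (a + b) u) [::].
Proof.
move=> vu cu; exists (compc u (cylc Rg R n)); split.
  by apply: valid_compc vu _; exact: all_cubical_cylc.
case: n u vu cu => [|n] u vu cu S;
  rewrite coef_scale coef_nil subr0 !coef_evalc evalc_bd evalc_compcA evalc_compc.
  by under evalc_ext => T do rewrite cylc_bdc0; rewrite evalcZ.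
under evalc_ext => T do rewrite cylc_bdcS.
rewrite evalcB evalcZ -evalc_compc.
rewrite -evalc_compcA evalc_compc_coef0 ?subr0 //; first exact: cycle_compc_bdc.
exact: all_cubical_cylc.
Qed.

Lemma homologous_scale_dvd n (u : chain n) r s c :
  valid u -> is_cycle a b u -> r - s = c * (a + b) ->
  homologous (scale r u) (scale s u).
Proof.
move=> vu cu rsc; have [w [vw hw]] := homologous_scale c (homologous_scale_addr0 vu cu).
exists w; split=> // S.
by rewrite hw !coef_scale {2}/coef big_nil mulr0 subr0 mulrA -rsc mulrBl.
Qed.

Lemma homologous_expr_opp n (u : chain n) k :
  valid u -> is_cycle a b u -> homologous (scale ((- a) ^+ k) u) (scale (b ^+ k) u).
Proof.
move=> vu cu.
apply: (homologous_scale_dvd (c := - \sum_(i < k) (- a) ^+ (k.-1 - i) * b ^+ i)) => //.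
by rewrite subrXX; ring.
Qed.

Lemma homologous_iter_SD n (u : chain n) k :
  valid u -> is_cycle a b u ->
  homologous (scale (a ^+ k) (iter k (@SD Rg R X n) u)) (scale ((- a) ^+ k) u).
Proof.
move=> vu cu; elim: k => [|k IH].
  by apply: homologous_coef => S; rewrite !coef_scale.
have [vk ck] := valid_cycle_iter_SD k vu cu.
apply: (homologous_add (homologous_scale (a ^+ k) (homologous_SD vk ck))
                       (homologous_scale (- a) IH)) => S.
by rewrite /= !coef_scale !exprS; ring.
Qed.

End Homology.

Theorem lemma4 (Rg : comPzRingType) (R : realType) (X : topologicalType)
  (a b : Rg) (k n : nat) (u : chain Rg R X n) :
  valid u -> is_cycle a b u ->
  homologous a b (scale (a ^+ k) (iter k (@SD Rg R X n) u)) (scale (b ^+ k) u) /\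
  homologous a b (scale (b ^+ k) (iter k (@SD Rg R X n) u)) (scale (a ^+ k) u).
Proof.
move=> vu cu; have [vk ck] := valid_cycle_iter_SD k vu cu.
have SDk := homologous_iter_SD k vu cu.
split.
  apply: homologous_add SDk (homologous_expr_opp k vu cu) _ => S.
  by rewrite addrA subrK.
have signE x : (-1) ^+ k * x ^+ k = (- x) ^+ k :> Rg by rewrite -exprMn mulN1r.
apply: homologous_add (homologous_sym (homologous_expr_opp k vk ck))
                      (homologous_scale ((-1) ^+ k) SDk) _ => S.
by rewrite !coef_scale !mulrA !signE opprK; ring.
Qed.
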